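(* Consider the uncertain control-affine system $$\dot x = f(x) + B(x)\left[u - \varphi(x)^\top \theta\right],\qquad x\in\mathbb{R}^n,\ u\in\mathbb{R}^m,$$ with unknown constant parameter $\theta\in\mathbb{R}^p$, smooth $f:\mathbb{R}^n\to\mathbb{R}^n$, smooth $B:\mathbb{R}^n\to\mathbb{R}^{n\times m}$ with columns $b_1,\dots,b_m$, and smooth $\varphi:\mathbb{R}^n\to\mathbb{R}^{p\times m}$ with columns $\varphi_1,\dots,\varphi_m$ (so the uncertainty $\Delta(x)^\top\theta=B(x)\varphi(x)^\top\theta$ lies in the span of $B(x)$, i.e. satisfies the matching condition). Suppose a uniformly bounded Riemannian metric $M(x)$ satisfies the stronger CCM conditions (defined in the context) for the nominal system $\dot x = f(x)+B(x)u$ with rate $\lambda>0$. Then the same metric $M(x)$ satisfies the stronger CCM conditions, with the same rate $\lambda$, for the true system, i.e. for the system $\dot x = f_\theta(x) + B(x)u$ with drift $f_\theta(x) := f(x) - B(x)\varphi(x)^\top\theta$ (for the value of $\theta$).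
   Context: A Riemannian metric $M(x)$ is a smooth, symmetric, positive definite matrix function on $\mathbb{R}^n$; uniformly bounded means $\alpha_1 I\preceq M(x)\preceq \alpha_2 I$ for constants $0<\alpha_1\le\alpha_2$. For a vector field $v$, $\partial_v M := \sum_i \frac{\partial M}{\partial x_i} v_i$. For a control-affine system $\dot x = g(x) + B(x)u$ with columns $b_i$ of $B$, the metric $M$ satisfies the stronger CCM (control contraction metric) conditions with rate $\lambda>0$ if, for all $x$ and all $\delta_x\neq 0$ with $\delta_x^\top M(x)B(x)=0$, $$\delta_x^\top\left(\frac{\partial g}{\partial x}^\top M + M\frac{\partial g}{\partial x} + \dot M + 2\lambda M\right)\delta_x\le 0,\qquad \dot M := \partial_g M,$$ and, for each $i=1,\dots,m$, $\partial_{b_i}M + \frac{\partial b_i}{\partial x}^\top M + M\frac{\partial b_i}{\partial x} = 0$ (each $b_i$ is a Killing vector field for $M$). *)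

From HB Require Import structures.
From mathcomp Require Import all_boot all_order all_algebra.
From mathcomp Require Import all_classical all_reals all_analysis.
Set Implicit Arguments. Unset Strict Implicit. Unset Printing Implicit Defensive.
Import Order.TTheory GRing.Theory Num.Theory.
Import numFieldNormedType.Exports.
Local Open Scope ring_scope.

Definition basis_vec (R : realType) (n : nat) (j : 'I_n) : 'cV[R]_n :=
  delta_mx j 0.

Definition partial (R : realType) (n : nat) (W : normedModType R)
  (F : 'cV[R]_n -> W) (j : 'I_n) (x : 'cV[R]_n) : W :=
  derive F x (basis_vec R j).

Fixpoint Ck (R : realType) (n : nat) (W : normedModType R) (k : nat)
  (F : 'cV[R]_n -> W) : Prop :=
  match k with
  | 0%N => True
  | k'.+1 => (forall x, differentiable F x) /\
             (forall v : 'cV[R]_n, Ck k' (fun x => derive F x v))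
  end.

Definition smooth (R : realType) (n : nat) (W : normedModType R)
  (F : 'cV[R]_n -> W) : Prop := forall k, Ck k F.

Definition jacobian (R : realType) (n : nat) (g : 'cV[R]_n -> 'cV[R]_n)
  (x : 'cV[R]_n) : 'M[R]_n :=
  \matrix_(i < n, j < n) (partial g j x) i 0.

Definition dirM (R : realType) (n : nat) (M : 'cV[R]_n -> 'M[R]_n)
  (v : 'cV[R]_n -> 'cV[R]_n) (x : 'cV[R]_n) : 'M[R]_n :=
  \sum_(i < n) (v x i 0) *: partial M i x.

Definition qform (R : realType) (n : nat) (A : 'M[R]_n) (d : 'cV[R]_n) : R :=
  (d^T *m A *m d) 0 0.

Definition riemannian_metric (R : realType) (n : nat)
  (M : 'cV[R]_n -> 'M[R]_n) : Prop :=
  smooth M /\ (forall x, (M x)^T = M x) /\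
  (forall x (d : 'cV[R]_n), d != 0 -> 0 < qform (M x) d).

Definition uniformly_bounded (R : realType) (n : nat)
  (M : 'cV[R]_n -> 'M[R]_n) (alpha1 alpha2 : R) : Prop :=
  0 < alpha1 /\ alpha1 <= alpha2 /\
  forall x (d : 'cV[R]_n),
    qform (alpha1%:M) d <= qform (M x) d /\ qform (M x) d <= qform (alpha2%:M) d.

Definition colfield (R : realType) (n m : nat) (B : 'cV[R]_n -> 'M[R]_(n, m))
  (i : 'I_m) : 'cV[R]_n -> 'cV[R]_n := fun x => col i (B x).

Definition stronger_CCM (R : realType) (n m : nat)
  (g : 'cV[R]_n -> 'cV[R]_n) (B : 'cV[R]_n -> 'M[R]_(n, m))
  (M : 'cV[R]_n -> 'M[R]_n) (lambda : R) : Prop :=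
  (forall x (d : 'cV[R]_n), d != 0 -> d^T *m M x *m B x = 0 ->
     qform ((jacobian g x)^T *m M x + M x *m jacobian g x
            + dirM M g x + (2 * lambda) *: M x) d <= 0) /\
  (forall i : 'I_m, forall x,
     dirM M (colfield B i) x + (jacobian (colfield B i) x)^T *m M x
       + M x *m jacobian (colfield B i) x = 0).

From HB Require Import structures.
From mathcomp Require Import all_boot all_order all_algebra.
From mathcomp Require Import all_classical all_reals all_analysis.
From mathcomp Require Import ring.
(* Imported last so that [jacobian] is [Defs.jacobian], not MathComp-Analysis's. *)
From Pilot Require Import Defs.
Import Order.TTheory GRing.Theory Num.Theory.
Import numFieldNormedType.Exports.
Local Open Scope ring_scope.

(** Write [L_g M := J_g^T M + M J_g + d_g M], so that the stronger CCM
  conditions read [delta^T (L_g M + 2 lambda M) delta <= 0] on the directions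
  with [delta^T M B = 0], and [L_(b_k) M = 0].  [L_g M] is additive in [g],
  and [L_(B w) M = sum_k w_k L_(b_k) M + M B (dw) + (dw)^T B^T M], whose last
  two terms have zero quadratic form on exactly those directions.  The true
  drift is [f - B w] with [w = phi^T theta], so by the Killing conditions its
  quadratic form coincides with that of [f]; the Killing conditions do not
  involve the drift at all. *)

Section matrix_derive.
Context {R : realType} {V : normedModType R}.

Lemma derivable_trmx a b (A : V -> 'M[R]_(a, b)) x v :
  derivable A x v -> derivable (fun y => (A y)^T) x v.
Proof.
move/derivable_mxP => dA; apply/derivable_mxP => i j.
have -> : (fun y => (A y)^T i j) = fun y => A y j i by apply/funext => y; rewrite mxE.
exact: dA.
Qed.

Lemma mulmx_funE a b c (A : V -> 'M[R]_(a, b)) (C : V -> 'M[R]_(b, c)) i j :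
  (fun y => (A y *m C y) i j) = \sum_(l < b) ((fun y => A y i l) * (fun y => C y l j)).
Proof. by apply/funext => y; rewrite mxE fct_sumE. Qed.

Lemma derivable_mulmx a b c (A : V -> 'M[R]_(a, b)) (C : V -> 'M[R]_(b, c)) x v :
  derivable A x v -> derivable C x v -> derivable (fun y => A y *m C y) x v.
Proof.
move=> /derivable_mxP dA /derivable_mxP dC; apply/derivable_mxP => i j.
rewrite mulmx_funE; apply: derivable_sum => l; exact: derivableM.
Qed.

Lemma derive_mulmx a b c (A : V -> 'M[R]_(a, b)) (C : V -> 'M[R]_(b, c)) x v :
  derivable A x v -> derivable C x v ->
  'D_v (fun y => A y *m C y) x = 'D_v A x *m C x + A x *m 'D_v C x.
Proof.
move=> dA dC; rewrite derive_mx; last exact: derivable_mulmx.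
apply/matrixP => i j; rewrite !mxE mulmx_funE.
have /derivable_mxP dAij := dA; have /derivable_mxP dCij := dC.
rewrite derive_sum => [|l]; last exact: derivableM.
rewrite -big_split; apply: eq_bigr => l _.
rewrite deriveM // (derive_mx dA) (derive_mx dC) !mxE.
by rewrite /GRing.scale /= addrC mulrC [C x l j * _]mulrC.
Qed.

End matrix_derive.

Section quadratic_form.
Context {R : realType} {n : nat}.
Implicit Types (A C : 'M[R]_n) (d : 'cV[R]_n).

Lemma qform0 d : qform 0 d = 0.
Proof. by rewrite /qform mulmx0 mul0mx mxE. Qed.

Lemma qformD A C d : qform (A + C) d = qform A d + qform C d.
Proof. by rewrite /qform mulmxDr mulmxDl mxE. Qed.

Lemma qformB A C d : qform (A - C) d = qform A d - qform C d.
Proof. by rewrite qformD /qform mulmxN mulNmx [X in _ + X]mxE. Qed.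

Lemma qformZ (a : R) A d : qform (a *: A) d = a * qform A d.
Proof. by rewrite /qform -scalemxAr -scalemxAl mxE. Qed.

Lemma qform_sum (I : Type) (r : seq I) (F : I -> 'M[R]_n) d :
  qform (\sum_(i <- r) F i) d = \sum_(i <- r) qform (F i) d.
Proof.
elim/big_rec2: _ => [|i a b _ <-]; first exact: qform0.
by rewrite qformD.
Qed.

Lemma qform_trmx_mul A C d : C^T = C -> qform (A^T *m C) d = qform (C *m A) d.
Proof.
move=> sym_C; rewrite /qform.
have <- : (d^T *m (C *m A) *m d)^T = d^T *m (A^T *m C) *m d.
  by rewrite !trmx_mul trmxK sym_C !mulmxA.
by rewrite mxE.
Qed.

End quadratic_form.

Section lie_derivative.
Context {R : realType} {n : nat}.
Implicit Types (M : 'cV[R]_n -> 'M[R]_n) (x : 'cV[R]_n) (d : 'cV[R]_n).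

Definition jacobian_mx {k} (F : 'cV[R]_n -> 'cV[R]_k) x : 'M[R]_(k, n) :=
  \matrix_(i < k, j < n) (partial F j x) i 0.

Definition lie_derivative M (g : 'cV[R]_n -> 'cV[R]_n) x : 'M[R]_n :=
  (jacobian g x)^T *m M x + M x *m jacobian g x + dirM M g x.

Lemma partial_colfield m (B : 'cV[R]_n -> 'M[R]_(n, m)) k j x :
  (forall v, derivable B x v) ->
  partial (colfield B k) j x = col k (partial B j x).
Proof.
move=> dB; have -> : colfield B k = fun y => B y *m delta_mx k 0.
  by apply/funext => y; rewrite /colfield colE.
by rewrite /partial derive_mulmx // derive_cst mulmx0 addr0 colE.
Qed.

Lemma jacobianB (F G : 'cV[R]_n -> 'cV[R]_n) x :
  (forall v, derivable F x v) -> (forall v, derivable G x v) ->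
  jacobian (fun y => F y - G y) x = jacobian F x - jacobian G x.
Proof.
move=> dF dG; apply/matrixP => i j.
by rewrite !mxE /partial (deriveB (f := F) (g := G)) // !mxE.
Qed.

Lemma jacobian_mulmx m (B : 'cV[R]_n -> 'M[R]_(n, m)) (w : 'cV[R]_n -> 'cV[R]_m) x :
  (forall v, derivable B x v) -> (forall v, derivable w x v) ->
  jacobian (fun y => B y *m w y) x =
    \sum_(k < m) w x k 0 *: jacobian (colfield B k) x + B x *m jacobian_mx w x.
Proof.
move=> dB dw; apply/matrixP => i j.
rewrite !mxE /partial derive_mulmx // summxE !mxE; congr (_ + _).
  apply: eq_bigr => k _.
  by rewrite !mxE (@partial_colfield m B k j x dB) mxE mulrC.
by apply: eq_bigr => k _; rewrite mxE.
Qed.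

Lemma dirMB M (F G : 'cV[R]_n -> 'cV[R]_n) x :
  dirM M (fun y => F y - G y) x = dirM M F x - dirM M G x.
Proof. by rewrite /dirM -sumrB; apply: eq_bigr => i _; rewrite !mxE scalerBl. Qed.

Lemma dirM_mulmx m M (B : 'cV[R]_n -> 'M[R]_(n, m)) (w : 'cV[R]_n -> 'cV[R]_m) x :
  dirM M (fun y => B y *m w y) x = \sum_(k < m) w x k 0 *: dirM M (colfield B k) x.
Proof.
rewrite /dirM; under eq_bigr => i _ do rewrite mxE scaler_suml.
rewrite exchange_big /=; apply: eq_bigr => k _; rewrite scaler_sumr.
by apply: eq_bigr => i _; rewrite scalerA /colfield mxE mulrC.
Qed.

Lemma lie_derivativeB M (F G : 'cV[R]_n -> 'cV[R]_n) x :
  (forall v, derivable F x v) -> (forall v, derivable G x v) ->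
  lie_derivative M (fun y => F y - G y) x = lie_derivative M F x - lie_derivative M G x.
Proof.
move=> dF dG; rewrite /lie_derivative jacobianB // dirMB.
rewrite linearB /= mulmxBl mulmxBr.
by apply/matrixP => i j; rewrite !mxE; ring.
Qed.

Lemma qform_lie_derivative M g x d : (M x)^T = M x ->
  qform (lie_derivative M g x) d =
    2 * qform (M x *m jacobian g x) d + qform (dirM M g x) d.
Proof. by move=> sym_M; rewrite !qformD qform_trmx_mul // mulr2n mulrDl mul1r. Qed.

Lemma qform_lie_derivative_mulmx m M (B : 'cV[R]_n -> 'M[R]_(n, m))
    (w : 'cV[R]_n -> 'cV[R]_m) x d :
  (M x)^T = M x -> d^T *m M x *m B x = 0 ->
  (forall v, derivable B x v) -> (forall v, derivable w x v) ->
  qform (lie_derivative M (fun y => B y *m w y) x) d =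
    \sum_(k < m) w x k 0 * qform (lie_derivative M (colfield B k) x) d.
Proof.
move=> sym_M dMB0 dB dw.
have dwB_annihilated : qform (M x *m (B x *m jacobian_mx w x)) d = 0.
  by rewrite /qform !mulmxA dMB0 !mul0mx mxE.
rewrite qform_lie_derivative // jacobian_mulmx // dirM_mulmx mulmxDr qformD.
rewrite dwB_annihilated addr0 mulmx_sumr !qform_sum mulr_sumr -big_split.
apply: eq_bigr => k _; rewrite -scalemxAr !qformZ qform_lie_derivative //.
by rewrite mulrDr mulrCA.
Qed.

End lie_derivative.

Lemma smooth_derivable (R : realType) (n : nat) (W : normedModType R)
    (F : 'cV[R]_n -> W) x v :
  smooth F -> derivable F x v.
Proof. by move=> /(_ 1%N) [dF _]; exact: diff_derivable. Qed.

Theorem lemma1 (R : realType) (n m p : nat)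
  (f : 'cV[R]_n -> 'cV[R]_n) (B : 'cV[R]_n -> 'M[R]_(n, m))
  (phi : 'cV[R]_n -> 'M[R]_(p, m)) (theta : 'cV[R]_p)
  (M : 'cV[R]_n -> 'M[R]_n) (alpha1 alpha2 lambda : R) :
  smooth f -> smooth B -> smooth phi ->
  riemannian_metric M -> uniformly_bounded M alpha1 alpha2 ->
  0 < lambda ->
  stronger_CCM f B M lambda ->
  stronger_CCM (fun x => f x - B x *m ((phi x)^T *m theta)) B M lambda.
Proof.
move=> sf sB sphi [_ [sym_M _]] _ _ [ccm_f killing]; split; last exact: killing.
move=> x d d_neq0 dMB0.
pose w y := (phi y)^T *m theta.
have df v : derivable f x v by exact: smooth_derivable.
have dB v : derivable B x v by exact: smooth_derivable.
have dw v : derivable w x v.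
  apply: derivable_mulmx; last exact: derivable_cst.
  exact/derivable_trmx/smooth_derivable.
have dBw v : derivable (fun y => B y *m w y) x v by exact: derivable_mulmx.
have lie_b_eq0 k : lie_derivative M (colfield B k) x = 0.
  by rewrite /lie_derivative addrC addrA killing.
change (qform (lie_derivative M (fun y => f y - B y *m w y) x
                + (2 * lambda) *: M x) d <= 0).
rewrite qformD lie_derivativeB // qformB qform_lie_derivative_mulmx //.
rewrite big1 => [|k _]; last by rewrite lie_b_eq0 qform0 mulr0.
by rewrite subr0 -qformD; exact: ccm_f.
Qed.
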